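(* Let $f$ be one of $G_3,G_4,G_5,G_6,G^{\#}_{10}$, and let $\widehat p_0,\dots,\widehat p_4$ be a normalized configuration of 5 distinct points on the unit sphere $S^2$ that minimizes the energy $\sum_{i<j}f(\|\widehat p_i-\widehat p_j\|)$ among all 5-point configurations on $S^2$. Then $\|\widehat p_4-\widehat p_0\|>1/2$ and $\|\widehat p_4-\widehat p_i\|>4/\sqrt{13}$ for $i=1,2,3$.
   Context: $G_k(r)=(4-r^2)^k$ and $G^{\#}_{10}=G_{10}+28G_5+102G_2$. A configuration $\widehat p_0,\dots,\widehat p_4$ on $S^2$ is normalized if $\widehat p_4=(0,0,1)$ and $\|\widehat p_4-\widehat p_0\|\le\|\widehat p_4-\widehat p_i\|$ for all $i\in\{1,2,3\}$. *)

From Stdlib Require Import Reals Lra.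
Open Scope R_scope.

Definition pt : Type := (R * R * R)%type.

Definition dist3 (p q : pt) : R :=
  let '(x1, y1, z1) := p in
  let '(x2, y2, z2) := q in
  sqrt ((x1 - x2)^2 + (y1 - y2)^2 + (z1 - z2)^2).

Definition on_S2 (p : pt) : Prop :=
  let '(x, y, z) := p in x^2 + y^2 + z^2 = 1.

Definition G (k : nat) (r : R) : R := (4 - r^2)^k.

Definition Gsharp10 (r : R) : R := G 10 r + 28 * G 5 r + 102 * G 2 r.

Definition config5_on_S2 (p : nat -> pt) : Prop :=
  forall i, (i < 5)%nat -> on_S2 (p i).

Definition distinct5 (p : nat -> pt) : Prop :=
  forall i j, (i < 5)%nat -> (j < 5)%nat -> i <> j -> p i <> p j.

(* energy: sum_{0 <= i < j <= 4} f(|p_i - p_j|) *)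
Definition energy5 (f : R -> R) (p : nat -> pt) : R :=
  sum_f_R0 (fun j => sum_f_R0 (fun i => f (dist3 (p i) (p (S j)))) j) 3.

Definition north : pt := (0, 0, 1).

Definition normalized5 (p : nat -> pt) : Prop :=
  p 4%nat = north /\
  forall i, (1 <= i <= 3)%nat -> dist3 (p 4%nat) (p 0%nat) <= dist3 (p 4%nat) (p i).

(* On S^2 one has ||p - q||^2 = 4 - ||p + q||^2, so each f here becomes a function phi of
   s = ||p + q||^2 which is nonnegative and nondecreasing on [0, oo), and the ten values s_ij
   of a 5-point configuration satisfy sum s_ij = 15 + ||sum p_i||^2 >= 15.  A minimizer has
   energy at most that of the triangular bipyramid, phi 0 + 6 phi 2 + 3 phi 1.  If
   ||p_4 - p_0|| <= 1/2 then s_04 >= 15/4 and phi (15/4) alone is too large.  If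
   ||p_4 - p_i|| <= 4/sqrt 13 then, p_0 being nearest to p_4, both s_04 and s_i4 are
   >= 36/13; bounding phi from below by a line on [0, oo), and by that line plus a gap on
   [36/13, oo), again pushes the energy above the bipyramid's. *)
From Stdlib Require Import Reals Lra Lia Psatz.
Open Scope R_scope.

Definition norm2_add (p q : pt) : R :=
  let '(x1, y1, z1) := p in
  let '(x2, y2, z2) := q in
  (x1 + x2)^2 + (y1 + y2)^2 + (z1 + z2)^2.

Lemma norm2_add_nonneg p q : 0 <= norm2_add p q.
Proof.
  destruct p as [[x1 y1] z1], q as [[x2 y2] z2]; simpl.
  pose proof (pow2_ge_0 (x1 + x2)); pose proof (pow2_ge_0 (y1 + y2));
    pose proof (pow2_ge_0 (z1 + z2)).
  lra.
Qed.

Lemma norm2_add_sym p q : norm2_add p q = norm2_add q p.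
Proof. destruct p as [[x1 y1] z1], q as [[x2 y2] z2]; simpl; ring. Qed.

Lemma dist3_nonneg p q : 0 <= dist3 p q.
Proof. destruct p as [[x1 y1] z1], q as [[x2 y2] z2]; apply sqrt_pos. Qed.

Lemma dist3_sq_on_S2 p q : on_S2 p -> on_S2 q -> dist3 p q ^ 2 = 4 - norm2_add p q.
Proof.
  destruct p as [[x1 y1] z1], q as [[x2 y2] z2]; unfold on_S2, dist3, norm2_add.
  intros Hp Hq.
  pose proof (pow2_ge_0 (x1 - x2)); pose proof (pow2_ge_0 (y1 - y2));
    pose proof (pow2_ge_0 (z1 - z2)).
  rewrite <- Rsqr_pow2, Rsqr_sqrt by lra.
  lra.
Qed.

Lemma norm2_add_ge_of_dist3_le p q r :
  on_S2 p -> on_S2 q -> 0 <= r -> dist3 p q <= r -> 4 - r^2 <= norm2_add p q.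
Proof.
  intros Hp Hq Hr Hd.
  pose proof (dist3_sq_on_S2 p q Hp Hq).
  pose proof (dist3_nonneg p q).
  nra.
Qed.

Lemma G_on_S2 k p q : on_S2 p -> on_S2 q -> G k (dist3 p q) = norm2_add p q ^ k.
Proof.
  intros Hp Hq; unfold G.
  rewrite dist3_sq_on_S2 by assumption.
  f_equal; ring.
Qed.

Definition Gsharp10_profile (t : R) : R := t^10 + 28 * t^5 + 102 * t^2.

Lemma Gsharp10_on_S2 p q :
  on_S2 p -> on_S2 q -> Gsharp10 (dist3 p q) = Gsharp10_profile (norm2_add p q).
Proof.
  intros Hp Hq; unfold Gsharp10, Gsharp10_profile.
  rewrite !G_on_S2 by assumption; reflexivity.
Qed.

Definition pair_sum (g : nat -> nat -> R) : R :=
  sum_f_R0 (fun j => sum_f_R0 (fun i => g i (S j)) j) 3.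

Lemma energy5_pair_sum f p : energy5 f p = pair_sum (fun i j => f (dist3 (p i) (p j))).
Proof. reflexivity. Qed.

Lemma pair_sum_expand g : pair_sum g =
  g 0%nat 1%nat + g 0%nat 2%nat + g 1%nat 2%nat + g 0%nat 3%nat + g 1%nat 3%nat
  + g 2%nat 3%nat + g 0%nat 4%nat + g 1%nat 4%nat + g 2%nat 4%nat + g 3%nat 4%nat.
Proof. unfold pair_sum; simpl; ring. Qed.

Lemma pair_sum_ext g h :
  (forall i j, (i < j < 5)%nat -> g i j = h i j) -> pair_sum g = pair_sum h.
Proof. intros Hgh; rewrite !pair_sum_expand, !Hgh by lia; reflexivity. Qed.

Lemma pair_sum_ge_pairs_at_4 g i :
  (forall i j, (i < j < 5)%nat -> 0 <= g i j) -> (1 <= i <= 3)%nat ->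
  g 0%nat 4%nat + g i 4%nat <= pair_sum g.
Proof.
  intros Hg [Hi1 Hi3].
  rewrite pair_sum_expand.
  pose proof (Hg 0%nat 1%nat ltac:(lia)); pose proof (Hg 0%nat 2%nat ltac:(lia));
  pose proof (Hg 1%nat 2%nat ltac:(lia)); pose proof (Hg 0%nat 3%nat ltac:(lia));
  pose proof (Hg 1%nat 3%nat ltac:(lia)); pose proof (Hg 2%nat 3%nat ltac:(lia));
  pose proof (Hg 1%nat 4%nat ltac:(lia)); pose proof (Hg 2%nat 4%nat ltac:(lia));
  pose proof (Hg 3%nat 4%nat ltac:(lia)).
  destruct i as [|[|[|[|i]]]]; lia || lra.
Qed.

Lemma pair_sum_line_bound phi m q gap A s i :
  (forall t, 0 <= t -> m * t + q <= phi t) ->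
  (forall t, A <= t -> m * t + q + gap <= phi t) ->
  (forall i j, 0 <= s i j) -> A <= s 0%nat 4%nat -> A <= s i 4%nat -> (1 <= i <= 3)%nat ->
  m * pair_sum s + 10 * q + 2 * gap <= pair_sum (fun i j => phi (s i j)).
Proof.
  intros Hline Hgap Hs H0 Hi Hrange.
  set (excess i j := phi (s i j) - (m * s i j + q)).
  assert (Hsplit : pair_sum (fun i j => phi (s i j)) = pair_sum excess + m * pair_sum s + 10 * q)
    by (rewrite !pair_sum_expand; unfold excess; ring).
  assert (Hexcess : excess 0%nat 4%nat + excess i 4%nat <= pair_sum excess).
  { apply pair_sum_ge_pairs_at_4; [|assumption].
    intros a b _; unfold excess; pose proof (Hline (s a b) (Hs a b)); lra. }
  pose proof (Hgap _ H0); pose proof (Hgap _ Hi).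
  unfold excess in *; lra.
Qed.

Lemma pair_sum_norm2_add_ge p :
  config5_on_S2 p -> 15 <= pair_sum (fun i j => norm2_add (p i) (p j)).
Proof.
  intros Hc; rewrite pair_sum_expand.
  pose proof (Hc 0%nat ltac:(lia)) as H0; pose proof (Hc 1%nat ltac:(lia)) as H1;
  pose proof (Hc 2%nat ltac:(lia)) as H2; pose proof (Hc 3%nat ltac:(lia)) as H3;
  pose proof (Hc 4%nat ltac:(lia)) as H4.
  destruct (p 0%nat) as [[x0 y0] z0], (p 1%nat) as [[x1 y1] z1], (p 2%nat) as [[x2 y2] z2],
    (p 3%nat) as [[x3 y3] z3], (p 4%nat) as [[x4 y4] z4].
  unfold on_S2 in *; simpl.
  (* the sum equals 15 + ||p_0 + ... + p_4||^2 *)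
  pose proof (pow2_ge_0 (x0 + x1 + x2 + x3 + x4));
    pose proof (pow2_ge_0 (y0 + y1 + y2 + y3 + y4));
    pose proof (pow2_ge_0 (z0 + z1 + z2 + z3 + z4)).
  lra.
Qed.

Definition bipyramid (i : nat) : pt :=
  match i with
  | 0 => north
  | 1 => (0, 0, -1)
  | 2 => (1, 0, 0)
  | 3 => (-1/2, sqrt 3 / 2, 0)
  | _ => (-1/2, - (sqrt 3 / 2), 0)
  end.

Lemma bipyramid_on_S2 i : on_S2 (bipyramid i).
Proof.
  pose proof (sqrt_sqrt 3 ltac:(lra)).
  destruct i as [|[|[|[|i]]]]; unfold bipyramid, on_S2, north; nra.
Qed.

Definition bipyramid_energy (phi : R -> R) : R := phi 0 + 6 * phi 2 + 3 * phi 1.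

Lemma energy5_bipyramid phi f :
  (forall x y, on_S2 x -> on_S2 y -> f (dist3 x y) = phi (norm2_add x y)) ->
  energy5 f bipyramid = bipyramid_energy phi.
Proof.
  intros Hf.
  rewrite energy5_pair_sum, pair_sum_expand, !Hf by apply bipyramid_on_S2.
  unfold bipyramid_energy.
  replace (phi 0 + 6 * phi 2 + 3 * phi 1) with
    (phi 0 + phi 2 + phi 2 + phi 2 + phi 2 + phi 1 + phi 2 + phi 2 + phi 1 + phi 1) by ring.
  pose proof (sqrt_sqrt 3 ltac:(lra)).
  repeat f_equal; unfold bipyramid, norm2_add, north; nra.
Qed.

(* [15/4 = 4 - (1/2)^2] and [36/13 = 4 - (4 / sqrt 13)^2] are the values of [norm2_add]
   at the two distance thresholds, and [15] is the least possible value of the pair sum. *)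
Record admissible (phi : R -> R) : Prop := {
  admissible_nonneg : forall t, 0 <= t -> 0 <= phi t;
  admissible_mono : forall s t, 0 <= s <= t -> phi s <= phi t;
  admissible_far : bipyramid_energy phi < phi (15/4);
  admissible_line : exists m q gap, 0 <= m /\
    (forall t, 0 <= t -> m * t + q <= phi t) /\
    (forall t, 36/13 <= t -> m * t + q + gap <= phi t) /\
    bipyramid_energy phi < 15 * m + 10 * q + 2 * gap }.

Lemma minimizer_bounds phi f p :
  admissible phi ->
  (forall x y, on_S2 x -> on_S2 y -> f (dist3 x y) = phi (norm2_add x y)) ->
  config5_on_S2 p -> normalized5 p ->
  (forall q, config5_on_S2 q -> energy5 f p <= energy5 f q) ->
  dist3 (p 4%nat) (p 0%nat) > 1/2 /\
  (forall i, (1 <= i <= 3)%nat -> dist3 (p 4%nat) (p i) > 4 / sqrt 13).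
Proof.
  intros [Hnn Hmono Hfar (m & q & gap & Hm & Hline & Hgap & Hbeat)] Hf Hc [_ Hnearest] Hmin.
  set (s i j := norm2_add (p i) (p j)).
  assert (Hs : forall i j, 0 <= s i j) by (intros; apply norm2_add_nonneg).
  assert (Hle : pair_sum (fun i j => phi (s i j)) <= bipyramid_energy phi).
  { rewrite <- (energy5_bipyramid phi f Hf).
    replace (pair_sum _) with (energy5 f p).
    - apply Hmin; intros i _; apply bipyramid_on_S2.
    - rewrite energy5_pair_sum; apply pair_sum_ext; intros i j Hij; apply Hf; apply Hc; lia. }
  assert (Hclose : forall i r, (i <= 3)%nat -> 0 <= r ->
            dist3 (p 4%nat) (p i) <= r -> 4 - r^2 <= s i 4%nat).
  { intros i r Hi Hr Hd; unfold s; rewrite norm2_add_sym.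
    apply norm2_add_ge_of_dist3_le; auto; apply Hc; lia. }
  split.
  - apply Rnot_le_gt; intros Hd.
    assert (H04 : 4 - (1/2)^2 <= s 0%nat 4%nat) by (apply Hclose; [lia | lra | assumption]).
    pose proof (pair_sum_ge_pairs_at_4 (fun i j => phi (s i j)) 1 (fun i j _ => Hnn _ (Hs i j))
                  ltac:(lia)) as Hpairs; simpl in Hpairs.
    pose proof (Hmono (15/4) (s 0%nat 4%nat) ltac:(lra)).
    pose proof (Hnn (s 1%nat 4%nat) (Hs 1%nat 4%nat)).
    lra.
  - intros i Hi; apply Rnot_le_gt; intros Hd.
    assert (Hthreshold : 4 - (4 / sqrt 13)^2 = 36/13).
    { assert (H13 : sqrt 13 * sqrt 13 = 13) by (apply sqrt_sqrt; lra).
      assert (sqrt 13 <> 0) by (apply Rgt_not_eq, sqrt_lt_R0; lra).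
      replace ((4 / sqrt 13)^2) with (16 / (sqrt 13 * sqrt 13)) by (field; assumption).
      rewrite H13; field. }
    assert (Hr : 0 <= 4 / sqrt 13) by (apply Rlt_le, Rdiv_lt_0_compat, sqrt_lt_R0; lra).
    assert (Hi4 : 36/13 <= s i 4%nat).
    { rewrite <- Hthreshold; apply Hclose; auto; lia. }
    assert (H04 : 36/13 <= s 0%nat 4%nat).
    { rewrite <- Hthreshold; apply Hclose; [lia | assumption |].
      apply Rle_trans with (dist3 (p 4%nat) (p i)); auto. }
    pose proof (pair_sum_line_bound phi m q gap (36/13) s i Hline Hgap Hs H04 Hi4 Hi).
    assert (H15 : 15 <= pair_sum s) by apply (pair_sum_norm2_add_ge p Hc).
    pose proof (Rmult_le_compat_l m _ _ Hm H15).
    lra.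
Qed.

Lemma admissible_of_monotone phi :
  (forall t, 0 <= t -> 0 <= phi t) ->
  (forall s t, 0 <= s <= t -> phi s <= phi t) ->
  bipyramid_energy phi < phi (15/4) -> bipyramid_energy phi < 2 * phi (36/13) ->
  admissible phi.
Proof.
  intros Hnn Hmono Hfar Hnear; split; auto.
  exists 0, 0, (phi (36/13)); repeat split.
  - lra.
  - intros t Ht; pose proof (Hnn t Ht); lra.
  - intros t Ht; pose proof (Hmono (36/13) t ltac:(lra)); lra.
  - lra.
Qed.

Lemma bipyramid_energy_pow k : (1 <= k)%nat -> bipyramid_energy (fun t => t ^ k) = 6 * 2^k + 3.
Proof. intros Hk; unfold bipyramid_energy; rewrite pow_i, pow1 by lia; ring. Qed.

Lemma six_two_pow_lt_pow a c n k :
  (n <= k)%nat -> 2 <= a -> 6 * 2^n + 3 < c * a^n -> 6 * 2^k + 3 < c * a^k.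
Proof.
  intros Hnk Ha Hn; induction Hnk as [|k _ IH]; [assumption|].
  pose proof (pow_lt 2 k ltac:(lra)).
  simpl; nra.
Qed.

Lemma admissible_pow k : (3 <= k)%nat -> admissible (fun t => t ^ k).
Proof.
  intros Hk.
  assert (Hnn : forall t, 0 <= t -> 0 <= t ^ k) by (intros; apply pow_le; assumption).
  assert (Hmono : forall s t, 0 <= s <= t -> s ^ k <= t ^ k)
    by (intros; apply pow_incr; assumption).
  assert (Hfar : bipyramid_energy (fun t => t ^ k) < (15/4) ^ k).
  { rewrite bipyramid_energy_pow by lia; rewrite <- (Rmult_1_l ((15/4) ^ k)).
    apply (six_two_pow_lt_pow (15/4) 1 3); [lia | lra | simpl; lra]. }
  destruct (Nat.eq_dec k 3) as [-> | Hk4].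
  - split; auto.
    (* the tangent line of t^3 at t = 1 *)
    exists 3, (-2), ((36/13)^3 - 3 * (36/13) + 2); repeat split.
    + lra.
    + intros t Ht.
      assert (0 <= (t - 1)^2 * (t + 2)) by (apply Rmult_le_pos; [apply pow2_ge_0 | lra]).
      lra.
    + intros t Ht; nra.
    + rewrite bipyramid_energy_pow by lia; simpl; lra.
  - apply admissible_of_monotone; auto.
    rewrite bipyramid_energy_pow by lia.
    apply (six_two_pow_lt_pow (36/13) 2 4); [lia | lra | simpl; lra].
Qed.

Lemma admissible_Gsharp10_profile : admissible Gsharp10_profile.
Proof.
  unfold Gsharp10_profile.
  apply admissible_of_monotone; unfold bipyramid_energy; simpl.
  - intros t Ht.
    pose proof (pow_le t 10 Ht); pose proof (pow_le t 5 Ht); pose proof (pow_le t 2 Ht); lra.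
  - intros s t Hst.
    pose proof (pow_incr s t 10 Hst); pose proof (pow_incr s t 5 Hst);
      pose proof (pow_incr s t 2 Hst); lra.
  - lra.
  - lra.
Qed.

Theorem lemma2p1 (f : R -> R) (p : nat -> pt) :
  (f = G 3 \/ f = G 4 \/ f = G 5 \/ f = G 6 \/ f = Gsharp10) ->
  config5_on_S2 p ->
  distinct5 p ->
  normalized5 p ->
  (forall q : nat -> pt, config5_on_S2 q -> energy5 f p <= energy5 f q) ->
  dist3 (p 4%nat) (p 0%nat) > 1/2 /\
  (forall i, (1 <= i <= 3)%nat -> dist3 (p 4%nat) (p i) > 4 / sqrt 13).
Proof.
  intros Hf Hc _ Hn Hmin.
  destruct Hf as [-> | [-> | [-> | [-> | ->]]]];
    [ apply (minimizer_bounds (fun t => t ^ 3) (G 3))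
    | apply (minimizer_bounds (fun t => t ^ 4) (G 4))
    | apply (minimizer_bounds (fun t => t ^ 5) (G 5))
    | apply (minimizer_bounds (fun t => t ^ 6) (G 6))
    | apply (minimizer_bounds Gsharp10_profile Gsharp10) ];
    auto using admissible_pow, G_on_S2, admissible_Gsharp10_profile, Gsharp10_on_S2.
Qed.
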